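(* Let $L$ be a Latin square of order $n$ and let $\sigma=(\alpha,\beta,\gamma;(12))$ be an autoparatopism of $L$. Suppose $(i,j,k)\in O(L)$, and let $a=o_{\alpha\beta}(i)$, $b=o_{\beta\alpha}(j)$ and $c=o_\gamma(k)$. Then $$\operatorname{lcm}(2a,2b)=\operatorname{lcm}(2a,c)=\operatorname{lcm}(2b,c)=\operatorname{lcm}(2a,2b,c).$$
   Context: A Latin square $L$ of order $n$ is an $n\times n$ array with rows, columns and symbols indexed by $[n]=\{1,\dots,n\}$, in which each symbol occurs exactly once in each row and each column. Its set of triples is $O(L)=\{(i,j,L(i,j)):i,j\in[n]\}$. Permutations in $\mathcal S_n$ act on the right, and products are composed left to right: $i(\alpha\beta)=(i\alpha)\beta$. A paratopism is $\sigma=(\alpha,\beta,\gamma;\delta)$ with $\alpha,\beta,\gamma\in\mathcal S_n$ and $\delta\in\mathcal S_3$. It maps $L$ to the Latin square $L^\sigma$ whose triple set is obtained by replacing each triple $(x,y,z)\in O(L)$ with $(x\alpha,y\beta,z\gamma)$ and then permuting the three coordinates according to $\delta$. In particular, for $\delta=(12)$ the triple $(x,y,z)$ maps to $(y\beta,x\alpha,z\gamma)$. $\sigma$ is an autoparatopism of $L$ if $L^\sigma=L$. For a permutation $\pi$ and a point $i$, $o_\pi(i)$ denotes the length of the cycle of $\pi$ containing $i$; fixed points count as cycles of length $1$. *)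

From mathcomp Require Import all_boot all_fingroup.
Set Implicit Arguments. Unset Strict Implicit. Unset Printing Implicit Defensive.

(* Points, rows, columns, symbols: 'I_n (i.e. [n] shifted to 0..n-1). *)

Definition array (n : nat) := 'I_n -> 'I_n -> 'I_n.

Definition is_latin_square (n : nat) (L : array n) : Prop :=
  (forall (i k : 'I_n), #|[set j | L i j == k]| = 1) /\
  (forall (j k : 'I_n), #|[set i | L i j == k]| = 1).

Definition triples (n : nat) (L : array n) : {set 'I_n * 'I_n * 'I_n} :=
  [set (i, j, L i j) | i : 'I_n, j : 'I_n].

Definition para12 (n : nat) (a b g : {perm 'I_n}) (t : 'I_n * 'I_n * 'I_n)
  : 'I_n * 'I_n * 'I_n :=
  let: (x, y, z) := t in (b y, a x, g z).

Definition is_autoparatopism12 (n : nat) (L : array n) (a b g : {perm 'I_n}) : Prop :=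
  [set para12 a b g t | t in triples L] = triples L.

Definition cyc_len (n : nat) (p : {perm 'I_n}) (i : 'I_n) : nat := #|porbit p i|.

From mathcomp Require Import all_boot all_fingroup.

(* Applying sigma twice sends a cell (x, y) with symbol z to the cell
   (x (alpha beta), y (beta alpha)) with symbol z gamma^2.  Hence, for any m,
   the cycle lengths A, B, C of i, j, k satisfy: A | m and B | m force C | 2m,
   and since a row or a column together with a symbol determines the cell,
   A | m and C | 2m force B | m, while B | m and C | 2m force A | m.  Applied
   to m = lcm(A,B), lcm(2A,C)/2 and lcm(2B,C)/2 this shows that each of the
   three pairwise lcms is divisible by the remaining number. *)

Lemma eq_iter_porbit (T : finType) (s : {perm T}) x m :
  (iter m s x == x) = (#|porbit s x| %| m).
Proof.
set c := #|porbit s x|.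
have c_gt0 : 0 < c by rewrite lt0n card_porbit_neq0.
have iter_mulc q : iter (q * c) s x = x.
  by elim: q => [|q IHq] //; rewrite mulSn iterD IHq iter_porbit.
rewrite {1}(divn_eq m c) addnC iterD iter_mulc /dvdn.
apply/eqP/eqP => [iter_mod | ->] //.
have mod_lt : m %% c < c by rewrite ltn_mod.
apply/eqP; rewrite -(nth_uniq x _ _ (uniq_traject_porbit s x)) ?size_traject //.
by rewrite !nth_traject // iter_mod.
Qed.

Lemma cards_eq1_inj (T : finType) (P : pred T) y1 y2 :
  #|[set y | P y]| = 1 -> P y1 -> P y2 -> y1 = y2.
Proof.
move=> /eqP/cards1P[z def_z] P_y1 P_y2.
have : y2 \in [set y | P y] by rewrite inE.
have : y1 \in [set y | P y] by rewrite inE.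
by rewrite def_z !inE => /eqP-> /eqP->.
Qed.

Lemma lcmn_double_even x c : 2 %| lcmn (2 * x) c.
Proof. exact: dvdn_trans (dvdn_mulr _ (dvdnn 2)) (dvdn_lcml _ _). Qed.

Lemma lcmn_double_dvd x y c :
  (forall m, x %| m -> c %| 2 * m -> y %| m) -> 2 * y %| lcmn (2 * x) c.
Proof.
move=> dvd_y; set l := lcmn (2 * x) c.
have def_l : l = 2 * (l %/ 2) by rewrite mulnC divnK ?lcmn_double_even.
rewrite def_l dvdn_pmul2l //; apply: dvd_y; last by rewrite -def_l dvdn_lcmr.
by rewrite -(@dvdn_pmul2l 2) // -def_l dvdn_lcml.
Qed.

Lemma lcmn_double_pairs_eq A B C :
  (forall m, A %| m -> B %| m -> C %| 2 * m) ->
  (forall m, A %| m -> C %| 2 * m -> B %| m) ->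
  (forall m, B %| m -> C %| 2 * m -> A %| m) ->
  let l := lcmn (lcmn (2 * A) (2 * B)) C in
  [/\ lcmn (2 * A) (2 * B) = l, lcmn (2 * A) C = l & lcmn (2 * B) C = l].
Proof.
move=> dvd_C dvd_B dvd_A l; rewrite {}/l.
have C_dvd : C %| lcmn (2 * A) (2 * B).
  by rewrite -muln_lcmr dvd_C ?dvdn_lcml ?dvdn_lcmr.
have B_dvd := lcmn_double_dvd _ _ _ dvd_B.
have A_dvd := lcmn_double_dvd _ _ _ dvd_A.
split; apply/esym.
- exact/lcmn_idPl.
- by rewrite lcmnAC; apply/lcmn_idPl.
- by rewrite (lcmnC (2 * A)) lcmnAC; apply/lcmn_idPl.
Qed.

Section Autoparatopism12.

Variables (n : nat) (L : array n) (a b g : {perm 'I_n}).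
Hypothesis L_latin : is_latin_square L.
Hypothesis sigma_auto : is_autoparatopism12 L a b g.

Lemma latin_row_inj x : injective (L x).
Proof.
move=> y1 y2 eq_y.
apply: (@cards_eq1_inj _ (fun y => L x y == L x y1) _ _ (L_latin.1 _ _)) => //.
by rewrite eq_y.
Qed.

Lemma latin_col_inj y : injective (L^~ y).
Proof.
move=> x1 x2 eq_x.
apply: (@cards_eq1_inj _ (fun x => L x y == L x1 y) _ _ (L_latin.2 _ _)) => //.
by rewrite eq_x.
Qed.

Lemma autoparatopism12_cell x y : L (b y) (a x) = g (L x y).
Proof.
have : para12 a b g (x, y, L x y) \in triples L.
  by rewrite -sigma_auto; apply: imset_f; apply/imset2P; exists x y.
by case/imset2P=> x' y' _ _ [-> -> ->].
Qed.

Lemma autoparatopism12_iter m x y :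
  L (iter m (a * b)%g x) (iter m (b * a)%g y) = iter (2 * m) g (L x y).
Proof.
elim: m => [|m IHm] //.
by rewrite mulnS iterD /= !permM !autoparatopism12_cell IHm.
Qed.

Variables i j : 'I_n.
Let A := cyc_len (a * b)%g i.
Let B := cyc_len (b * a)%g j.
Let C := cyc_len g (L i j).

Lemma cyc_len_symbol_dvd m : A %| m -> B %| m -> C %| 2 * m.
Proof.
rewrite -!eq_iter_porbit -autoparatopism12_iter.
by move=> /eqP-> /eqP->.
Qed.

Lemma cyc_len_col_dvd m : A %| m -> C %| 2 * m -> B %| m.
Proof.
rewrite -!eq_iter_porbit -autoparatopism12_iter => /eqP iter_i.
by rewrite iter_i => /eqP/latin_row_inj->.
Qed.

Lemma cyc_len_row_dvd m : B %| m -> C %| 2 * m -> A %| m.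
Proof.
rewrite -!eq_iter_porbit -autoparatopism12_iter => /eqP iter_j.
by rewrite iter_j => /eqP/latin_col_inj->.
Qed.

End Autoparatopism12.

Theorem lemma3p2 (n : nat) (L : array n) (a b g : {perm 'I_n}) (i j k : 'I_n) :
  is_latin_square L ->
  is_autoparatopism12 L a b g ->
  (i, j, k) \in triples L ->
  let A := cyc_len (a * b)%g i in
  let B := cyc_len (b * a)%g j in
  let C := cyc_len g k in
  [/\ lcmn (2 * A) (2 * B) = lcmn (lcmn (2 * A) (2 * B)) C,
      lcmn (2 * A) C = lcmn (lcmn (2 * A) (2 * B)) C &
      lcmn (2 * B) C = lcmn (lcmn (2 * A) (2 * B)) C].
Proof.
move=> L_latin sigma_auto /imset2P[x y _ _ [-> -> ->]] A B C.
apply: lcmn_double_pairs_eq.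
- exact: cyc_len_symbol_dvd.
- exact: cyc_len_col_dvd.
- exact: cyc_len_row_dvd.
Qed.
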